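(* Let $\langle N,P,c,b,\mathcal{A}\rangle$ be a PB instance satisfying the High Cardinality Budget Property ($l_o>h_{\mathcal{A}}$), and let $S$ be the output of the minimax-disutility version of Ordered-Relax on it. Then $ALG\le\left(2-\frac{1}{h_o}\right)OPT$, where $ALG=\max_{i\in N}(b-u_i(S))$ and $OPT=\min_{T\subseteq P,\,c(T)\le b}\max_{i\in N}(b-u_i(T))$.
   Context: A PB instance is $\langle N,P,c,b,\mathcal{A}\rangle$ with voters $N=\{1,\dots,n\}$, projects $P=\{p_1,\dots,p_m\}$, costs $c:P\to\mathbb{N}$, budget $b\in\mathbb{N}$, and approval sets $A_i\subseteq P$. $c(S)=\sum_{p\in S}c(p)$; $S$ is feasible if $c(S)\le b$; $u_i(S)=c(S\cap A_i)$; the disutility of voter $i$ from $S$ is $b-u_i(S)$. The ordered-fill algorithm with respect to a complete order $\succ$ on $P$ adds projects from highest- to lowest-ranked, stopping as soon as the next project does not fit within the budget. $l_o$ and $h_o$ denote the minimum and maximum cardinality of the outputs of ordered-fill algorithms over all complete orders on $P$; $h_{\mathcal{A}}=\max_{i\in N}|A_i|$. The instance satisfies the High Cardinality Budget Property if $l_o>h_{\mathcal{A}}$. The minimax-disutility Ordered-Relax algorithm: compute an optimal solution $(q^*,x^* )$ of the LP: minimize $q$ subject to $q\ge b-\sum_{p\in A_i}c(p)x_p$ for all $i\in N$, $\sum_{p\in P}c(p)x_p\le b$, $0\le x_p\le1$ for all $p$, $q\ge0$; then order projects in non-increasing order of $c(p)x^*_p$ (ties arbitrary), and starting from $S=\emptyset$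 add projects in this order, stopping as soon as the next project does not fit within the budget; output $S$. *)

From HB Require Import structures.
From mathcomp Require Import all_boot all_order all_algebra all_fingroup.
Set Implicit Arguments. Unset Strict Implicit. Unset Printing Implicit Defensive.
Import Order.TTheory GRing.Theory Num.Theory.

(* A PB instance: voters 'I_n, projects 'I_m, costs c : 'I_m -> nat,
   budget b : nat, approval sets A : 'I_n -> {set 'I_m}. *)

Section PB.
Variables (n m : nat) (c : 'I_m -> nat) (b : nat) (A : 'I_n -> {set 'I_m}).

Definition cost (S : {set 'I_m}) : nat := \sum_(p in S) c p.

Definition feasible (S : {set 'I_m}) : bool := cost S <= b.

Definition util (i : 'I_n) (S : {set 'I_m}) : nat := cost (S :&: A i).

(* disutility b - u_i(S) (nat subtraction; exact for feasible S since
   u_i(S) <= c(S) <= b) *)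
Definition disutil (i : 'I_n) (S : {set 'I_m}) : nat := b - util i S.

Definition maxdis (S : {set 'I_m}) : nat := \max_(i < n) disutil i S.

(* OPT = min over feasible T of max_i (b - u_i(T)); the empty set is feasible,
   and its value is <= b, so the default b of the min is harmless. *)
Definition OPT : nat := \big[minn/b]_(T : {set 'I_m} | feasible T) maxdis T.

Fixpoint fill_seq (acc : {set 'I_m}) (s : seq 'I_m) : {set 'I_m} :=
  match s with
  | [::] => acc
  | p :: s' => if cost acc + c p <= b then fill_seq (p |: acc) s' else acc
  end.

(* A complete order on P is given by a permutation sigma: sigma 0 is the
   highest-ranked project, sigma 1 the next, etc. *)
Definition order_seq (sigma : {perm 'I_m}) : seq 'I_m :=
  [seq sigma i | i <- enum 'I_m].

Definition ordered_fill (sigma : {perm 'I_m}) : {set 'I_m} :=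
  fill_seq set0 (order_seq sigma).

(* l_o, h_o: min / max cardinality of ordered-fill outputs over all orders.
   (Cardinalities are <= m, so the default m of the min is harmless.) *)
Definition l_o : nat := \big[minn/m]_(sigma : {perm 'I_m}) #|ordered_fill sigma|.
Definition h_o : nat := \max_(sigma : {perm 'I_m}) #|ordered_fill sigma|.

Definition h_A : nat := \max_(i < n) #|A i|.

Definition HCBP : Prop := (h_A < l_o)%N.

Local Open Scope ring_scope.

Definition lp_feasible (R : realFieldType) (q : R) (x : 'I_m -> R) : Prop :=
  [/\ forall i : 'I_n, q >= b%:R - \sum_(p in A i) (c p)%:R * x p,
      \sum_(p : 'I_m) (c p)%:R * x p <= b%:R,
      forall p : 'I_m, 0 <= x p /\ x p <= 1
    & 0 <= q].

Definition lp_optimal (R : realFieldType) (q : R) (x : 'I_m -> R) : Prop :=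
  lp_feasible q x /\
  forall (q' : R) (x' : 'I_m -> R), lp_feasible q' x' -> q <= q'.

Definition nonincr_order (R : realFieldType) (x : 'I_m -> R)
    (sigma : {perm 'I_m}) : Prop :=
  forall i j : 'I_m, (i <= j)%N ->
    (c (sigma j))%:R * x (sigma j) <= (c (sigma i))%:R * x (sigma i).

End PB.

From HB Require Import structures.
From mathcomp Require Import all_boot all_order all_algebra all_fingroup.
From mathcomp Require Import zify lra.
Set Implicit Arguments. Unset Strict Implicit. Unset Printing Implicit Defensive.
Import Order.TTheory GRing.Theory Num.Theory.
Local Open Scope ring_scope.

(* Let (q, x) be the LP optimum and w p = c(p) x_p.  Ordered fill along
   non-increasing w selects a prefix S, so for a voter i every weight on
   D = S \ A_i dominates every weight on B = A_i \ S.  The HCBP gives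
   |A_i| < |S|, hence |B| < |D|, and averaging yields (|B| + 1) w(B) <= |B| w(D).
   The budget and voter constraints give w(D) <= b - w(A_i) <= q, so
   w(B) <= (1 - 1/h_o) q since |B| < |S| <= h_o, and
   b - u_i(S) <= b - w(A_i) + w(B) <= (2 - 1/h_o) q.  Finally q <= OPT because
   every feasible T yields the LP point (maxdis T, indicator of T). *)

Section OrderedFill.
Variables (m : nat) (c : 'I_m -> nat) (b : nat).

Lemma fill_seq_take (acc : {set 'I_m}) (s : seq 'I_m) :
  exists k, fill_seq c b acc s = acc :|: [set p | p \in take k s].
Proof.
elim: s acc => [|p s IHs] acc /=.
  by exists 0%N; apply/setP => y; rewrite !inE orbF.
case: ifP => _; last by exists 0%N; apply/setP => y; rewrite !inE orbF.
have [k ->] := IHs (p |: acc); exists k.+1; apply/setP => y.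
by rewrite !inE /= orbA (orbC (y == p)).
Qed.

Lemma ordered_fill_rank (sigma : {perm 'I_m}) :
  exists k, forall p, (p \in ordered_fill c b sigma) = ((sigma^-1)%g p < k)%N.
Proof.
rewrite /ordered_fill; have [k ->] := fill_seq_take set0 (order_seq sigma).
exists k => p.
rewrite set0U inE /order_seq -map_take.
have -> : p = sigma ((sigma^-1)%g p) by rewrite permKV.
rewrite mem_map ?permK; last exact: perm_inj.
by rewrite in_take ?mem_enum ?index_enum_ord.
Qed.

Lemma ordered_fill_sorted (R : numDomainType) (w : 'I_m -> R) (sigma : {perm 'I_m}) :
    (forall i j : 'I_m, (i <= j)%N -> w (sigma j) <= w (sigma i)) ->
  {in ordered_fill c b sigma & ~: ordered_fill c b sigma, forall y p, w p <= w y}.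
Proof.
move=> w_sorted y p; have [k S_rank] := ordered_fill_rank sigma.
rewrite inE !S_rank -leqNgt => y_lt p_ge.
rewrite -(permKV sigma y) -(permKV sigma p); apply: w_sorted.
exact: leq_trans (ltnW y_lt) p_ge.
Qed.

Lemma geq_bigmin_seq (I : eqType) (r : seq I) (F : I -> nat) (d : nat) (j : I) :
  j \in r -> (\big[minn/d]_(i <- r) F i <= F j)%N.
Proof.
elim: r => // a r IHr; rewrite inE big_cons => /orP [/eqP <- | j_r].
  exact: geq_minl.
exact: leq_trans (geq_minr _ _) (IHr j_r).
Qed.

Lemma l_o_le_card_fill (sigma : {perm 'I_m}) : (l_o c b <= #|ordered_fill c b sigma|)%N.
Proof. by apply: geq_bigmin_seq; rewrite mem_index_enum. Qed.

Lemma card_fill_le_h_o (sigma : {perm 'I_m}) : (#|ordered_fill c b sigma| <= h_o c b)%N.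
Proof. exact: (leq_bigmax (F := fun s => #|ordered_fill c b s|)). Qed.

End OrderedFill.

Lemma natr_subn (R : realDomainType) (a b : nat) :
  (a - b)%N%:R = Num.max (a%:R - b%:R) 0 :> R.
Proof.
case: (leqP b a) => [b_le_a | /ltnW a_le_b].
  by rewrite natrB // max_l // subr_ge0 ler_nat.
by rewrite (eqP (_ : a - b == 0)%N) ?subn_eq0 // max_r // subr_le0 ler_nat.
Qed.

Lemma invn_le1 (R : numFieldType) (h : nat) : h%:R^-1 <= 1 :> R.
Proof. by case: h => [|h]; rewrite ?invr0 ?ler01 // invf_le1 ?ler1n ?ltr0n. Qed.

Lemma ler_natr_bigmax (R : numDomainType) (I : finType) (F : I -> nat) (K : R) :
  0 <= K -> (forall i, (F i)%:R <= K) -> (\max_i F i)%:R <= K.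
Proof.
by move=> K_ge0 F_le; elim/big_ind: _ => // a a' ? ?; rewrite /maxn; case: ifP.
Qed.

Lemma card_mul_sum_le (T : finType) (R : numDomainType) (w : T -> R) (B D : {set T}) :
    {in D & B, forall d p, w p <= w d} ->
  #|D|%:R * \sum_(p in B) w p <= #|B|%:R * \sum_(d in D) w d.
Proof.
move=> w_DB; rewrite !mulr_natl -!sumr_const exchange_big /=.
by apply: ler_sum => p p_B; apply: ler_sum => d d_D; exact: w_DB.
Qed.

Section LPRelaxation.
Variables (R : realFieldType) (n m : nat) (c : 'I_m -> nat) (b : nat).
Variable (A : 'I_n -> {set 'I_m}).

Lemma sum_cost_indicator (P : pred 'I_m) (T : {set 'I_m}) :
  \sum_(p | P p) (c p)%:R * ((p \in T)%:R : R) = (\sum_(p | P p && (p \in T)) c p)%:R.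
Proof.
rewrite natr_sum big_mkcondr; apply: eq_bigr => p _.
by case: (p \in T); rewrite ?mulr1 ?mulr0.
Qed.

Lemma maxdis_le_budget (T : {set 'I_m}) : (maxdis c b A T <= b)%N.
Proof. by apply/bigmax_leqP => i _; exact: leq_subr. Qed.

Lemma lp_feasible_indicator (T : {set 'I_m}) (q : nat) :
    feasible c b T -> (maxdis c b A T <= q)%N ->
  lp_feasible c b A (q%:R : R) (fun p => (p \in T)%:R).
Proof.
move=> T_feasible T_q; split.
- move=> i; rewrite sum_cost_indicator.
  have -> : (\sum_(p in A i | p \in T) c p = util c A i T)%N.
    by rewrite /util /cost; apply: eq_bigl => p; rewrite !inE andbC.
  apply: le_trans (_ : (disutil c b A i T)%:R <= _).
    by rewrite natr_subn le_max lexx.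
  rewrite ler_nat (leq_trans _ T_q) //.
  exact: (leq_bigmax (F := fun i => disutil c b A i T)).
- by rewrite sum_cost_indicator ler_nat.
- by move=> p; rewrite ler0n; case: (p \in T); rewrite /= ?ler01.
- exact: ler0n.
Qed.

Lemma lp_optimal_le_OPT (q : R) (x : 'I_m -> R) :
  lp_optimal c b A q x -> q <= (OPT c b A)%:R.
Proof.
case=> _ q_min; apply: (big_rec (fun y : nat => q <= y%:R)).
  apply: q_min (lp_feasible_indicator _ (maxdis_le_budget set0)).
  by rewrite /feasible /cost big_set0.
move=> T y T_feasible q_y; rewrite /minn; case: ifP => // _.
exact: q_min (lp_feasible_indicator T_feasible (leqnn _)).
Qed.

End LPRelaxation.

Lemma ler_one_sub_invn_mulr (R : realFieldType) (k h : nat) (s q : R) :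
  (k < h)%N -> 0 <= q -> k.+1%:R * s <= k%:R * q -> s <= (1 - h%:R^-1) * q.
Proof.
move=> k_lt_h q_ge0; rewrite -natr1 => k1_s.
have h_gt0 : 0 < h%:R :> R by rewrite ltr0n (leq_ltn_trans _ k_lt_h).
have hV : h%:R * h%:R^-1 = 1 :> R by rewrite mulfV ?gt_eqF.
have hV_k1 : h%:R^-1 * (k%:R + 1) <= 1 :> R.
  by rewrite -[leRHS]hV [leRHS]mulrC ler_pM2l ?invr_gt0 // natr1 ler_nat.
have k1_gt0 : 0 < k%:R + 1 :> R by rewrite natr1 ltr0n.
(* Multiply the goal by k + 1 and use h^-1 (k + 1) <= 1. *)
move: (h%:R^-1) hV_k1 => y y_k1; nra.
Qed.

Section VoterBound.
Variables (R : realFieldType) (n m : nat) (c : 'I_m -> nat) (b : nat).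
Variables (A : 'I_n -> {set 'I_m}) (q : R) (x : 'I_m -> R).
Hypothesis qx_feasible : lp_feasible c b A q x.

Let w (p : 'I_m) : R := (c p)%:R * x p.

Lemma lp_weight_ge0 (p : 'I_m) : 0 <= w p.
Proof. by case: qx_feasible => _ _ x_range _; rewrite mulr_ge0 //; case: (x_range p). Qed.

Lemma lp_weight_le_cost (p : 'I_m) : w p <= (c p)%:R.
Proof.
case: qx_feasible => _ _ x_range _; case: (x_range p) => _ x_le1.
by rewrite -[leRHS]mulr1 ler_wpM2l.
Qed.

Variables (S : {set 'I_m}) (i : 'I_n).
Hypothesis S_sorted : {in S & ~: S, forall y p, w p <= w y}.
Hypothesis card_A_lt_S : (#|A i| < #|S|)%N.

Lemma lp_weight_unselected_le :
  (#|A i :\: S|.+1)%:R * \sum_(p in A i :\: S) w p <= #|A i :\: S|%:R * q.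
Proof.
case: qx_feasible => q_disutil budget _ _.
set B := A i :\: S; set D := S :\: A i.
have card_B_lt_D : (#|B| < #|D|)%N.
  by move: (cardsID S (A i)) (cardsID (A i) S); rewrite setIC /B /D; lia.
have sum_A_D_le_b : \sum_(p in A i) w p + \sum_(p in D) w p <= b%:R.
  apply: le_trans budget; rewrite [leRHS](bigID (mem (A i))) lerD2l /=.
  rewrite [leLHS]big_mkcond [leRHS]big_mkcond; apply: ler_sum => p _.
  by rewrite !inE; case: (p \in A i); case: (p \in S); rewrite ?lp_weight_ge0.
have sum_D_le_q : \sum_(p in D) w p <= q.
  by move: (q_disutil i); rewrite -/w; lra.
have exchange : #|D|%:R * \sum_(p in B) w p <= #|B|%:R * \sum_(p in D) w p.
  apply: card_mul_sum_le => d p; rewrite !inE => /andP [_ d_S] /andP [p_S _].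
  by apply: S_sorted; rewrite ?inE.
apply: (@le_trans _ _ (#|D|%:R * \sum_(p in B) w p)).
  by rewrite ler_wpM2r ?ler_nat ?sumr_ge0 // => p _; exact: lp_weight_ge0.
by apply: le_trans exchange _; rewrite ler_wpM2l.
Qed.

Lemma disutil_le_lp_value (h : nat) :
  (#|A i :\: S| < h)%N -> (disutil c b A i S)%:R <= (2 - h%:R^-1) * q.
Proof.
move=> card_B_lt_h; case: qx_feasible => q_disutil _ _ q_ge0.
set sB := \sum_(p in A i :\: S) w p.
have sB_le : sB <= (1 - h%:R^-1) * q.
  exact: ler_one_sub_invn_mulr card_B_lt_h q_ge0 lp_weight_unselected_le.
have util_ge : (b%:R - (util c A i S)%:R) <= q + sB.
  have sum_AS_le : \sum_(p in A i :&: S) w p <= (util c A i S)%:R.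
    rewrite /util /cost natr_sum setIC.
    by apply: ler_sum => p _; exact: lp_weight_le_cost.
  move: (q_disutil i); rewrite -/w (big_setID S) /= -/sB; lra.
have hV_le1 := invn_le1 R h.
rewrite natr_subn ge_max mulr_ge0 ?andbT; lra.
Qed.

End VoterBound.

Theorem theorem8 (R : realFieldType) (n m : nat) (c : 'I_m -> nat) (b : nat)
    (A : 'I_n -> {set 'I_m})
    (HCB : HCBP c b A)
    (q : R) (x : 'I_m -> R) (Hopt : lp_optimal c b A q x)
    (sigma : {perm 'I_m}) (Hord : nonincr_order c x sigma) :
  let S := ordered_fill c b sigma in
  ((maxdis c b A S)%:R : R)
    <= (2 - ((h_o c b)%:R)^-1) * (OPT c b A)%:R.
Proof.
cbv zeta; set S := ordered_fill c b sigma.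
have [qx_feasible _] := Hopt; have [_ _ _ q_ge0] := qx_feasible.
have coef_ge0 : 0 <= 2 - (h_o c b)%:R^-1 :> R.
  by have := invn_le1 R (h_o c b); lra.
have S_sorted : {in S & ~: S, forall y p, (c p)%:R * x p <= (c y)%:R * x y}.
  exact: ordered_fill_sorted Hord.
have card_A_lt_S i : (#|A i| < #|S|)%N.
  apply: leq_ltn_trans (leq_bigmax (F := fun i => #|A i|) i) _.
  exact: leq_trans HCB (l_o_le_card_fill c b sigma).
apply: le_trans (_ : _ <= (2 - (h_o c b)%:R^-1) * q) _; last first.
  by rewrite ler_wpM2l // (lp_optimal_le_OPT Hopt).
apply: ler_natr_bigmax => [|i]; first by rewrite mulr_ge0.
apply: (disutil_le_lp_value qx_feasible S_sorted (card_A_lt_S i)).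
apply: leq_ltn_trans (subset_leq_card (subsetDl _ _)) _.
exact: leq_trans (card_A_lt_S i) (card_fill_le_h_o c b sigma).
Qed.
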